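(* In the category of domain-complete spaces (resp. of LCS-complete spaces) with continuous maps, every exponentiable object is a locally compact sober space. Consequently neither of these categories is Cartesian-closed.
   Context: A space is domain-complete (resp. LCS-complete) if it is homeomorphic to a $G_\delta$ subset (countable intersection of open sets), with the subspace topology, of some continuous dcpo with its Scott topology (resp. of some locally compact sober space, locally compact meaning every point has a neighborhood base of compact saturated sets). Both categories have finite products, computed as topological products. An object $X$ is exponentiable if the functor $-\times X$ has a right adjoint. *)

From Stdlib Require Import List.

Record Top := {
  carrier :> Type;
  is_open : (carrier -> Prop) -> Prop;
  open_ext : forall U V : carrier -> Prop,
      (forall x, U x <-> V x) -> is_open U -> is_open V;
  open_full : is_open (fun _ => True);
  open_inter : forall U V, is_open U -> is_open V -> is_open (fun x => U x /\ V x);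
  open_union : forall F : (carrier -> Prop) -> Prop,
      (forall U, F U -> is_open U) -> is_open (fun x => exists U, F U /\ U x)
}.
Arguments is_open {t} _.

Definition continuous {X Y : Top} (f : X -> Y) : Prop :=
  forall V : Y -> Prop, is_open V -> is_open (fun x => V (f x)).

Definition homeomorphic (X Y : Top) : Prop :=
  exists (f : X -> Y) (g : Y -> X),
    continuous f /\ continuous g /\
    (forall x, g (f x) = x) /\ (forall y, f (g y) = y).

Section Subspace.
Variables (X : Top) (A : X -> Prop).
Definition sub_open (U : {x : X | A x} -> Prop) : Prop :=
  exists V : X -> Prop, is_open V /\ forall y, U y <-> V (proj1_sig y).
Lemma sub_open_ext : forall U V, (forall x, U x <-> V x) -> sub_open U -> sub_open V.
Proof. intros U V H [W [HW HU]]. exists W; split; auto. intro y; rewrite <- HU; symmetry; auto. Qed.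
Lemma sub_open_full : sub_open (fun _ => True).
Proof. exists (fun _ => True); split; [apply open_full | tauto]. Qed.
Lemma sub_open_inter : forall U V, sub_open U -> sub_open V -> sub_open (fun x => U x /\ V x).
Proof.
  intros U V [U' [HU' HU]] [V' [HV' HV]]. exists (fun x => U' x /\ V' x); split.
  - apply open_inter; auto.
  - intro y; rewrite HU, HV; tauto.
Qed.
Lemma sub_open_union : forall F : ({x : X | A x} -> Prop) -> Prop,
    (forall U, F U -> sub_open U) -> sub_open (fun x => exists U, F U /\ U x).
Proof.
  intros F HF.
  exists (fun x => exists W, is_open W /\ (exists U, F U /\ forall y, U y <-> W (proj1_sig y)) /\ W x).
  split.
  - apply (open_ext _ (fun x => exists W, (fun W => is_open W /\
       (exists U, F U /\ forall y, U y <-> W (proj1_sig y))) W /\ W x)).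
    + intro x; split; intros [W HW]; exists W; tauto.
    + apply open_union. intros W [HW _]; exact HW.
  - intros y; split.
    + intros [U [FU Uy]]. destruct (HF U FU) as [W [HW HUW]].
      exists W; repeat split; auto. exists U; split; auto. apply HUW; auto.
    + intros [W [HW [[U [FU HUW]] Wy]]]. exists U; split; auto. apply HUW; auto.
Qed.
Definition subspace : Top :=
  {| carrier := {x : X | A x}; is_open := sub_open;
     open_ext := sub_open_ext; open_full := sub_open_full;
     open_inter := sub_open_inter; open_union := sub_open_union |}.
End Subspace.

Section Product.
Variables X Y : Top.
Definition prod_open (U : X * Y -> Prop) : Prop :=
  forall p, U p -> exists (V : X -> Prop) (W : Y -> Prop),
    is_open V /\ is_open W /\ V (fst p) /\ W (snd p) /\
    forall x y, V x -> W y -> U (x, y).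
Lemma prod_open_ext : forall U V, (forall x, U x <-> V x) -> prod_open U -> prod_open V.
Proof.
  intros U V H HU p Vp. destruct (HU p (proj2 (H p) Vp)) as [A [B HAB]].
  exists A, B; intuition. apply H; auto.
Qed.
Lemma prod_open_full : prod_open (fun _ => True).
Proof. intros p _. exists (fun _ => True), (fun _ => True); intuition; apply open_full. Qed.
Lemma prod_open_inter : forall U V, prod_open U -> prod_open V -> prod_open (fun x => U x /\ V x).
Proof.
  intros U V HU HV p [Up Vp].
  destruct (HU p Up) as [A [B [HA [HB [Ap [Bp HAB]]]]]].
  destruct (HV p Vp) as [A' [B' [HA' [HB' [Ap' [Bp' HAB']]]]]].
  exists (fun x => A x /\ A' x), (fun y => B y /\ B' y).
  repeat split; try apply open_inter; intuition.
Qed.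
Lemma prod_open_union : forall F : (X * Y -> Prop) -> Prop,
    (forall U, F U -> prod_open U) -> prod_open (fun x => exists U, F U /\ U x).
Proof.
  intros F HF p [U [FU Up]]. destruct (HF U FU p Up) as [A [B HAB]].
  exists A, B; intuition. exists U; split; auto.
Qed.
Definition prod_top : Top :=
  {| carrier := (X * Y)%type; is_open := prod_open;
     open_ext := prod_open_ext; open_full := prod_open_full;
     open_inter := prod_open_inter; open_union := prod_open_union |}.
End Product.

Definition G_delta {X : Top} (A : X -> Prop) : Prop :=
  exists U : nat -> X -> Prop,
    (forall n, is_open (U n)) /\ forall x, A x <-> forall n, U n x.

Record Dcpo := {
  dcarrier :> Type;
  le : dcarrier -> dcarrier -> Prop;
  le_refl : forall x, le x x;
  le_trans : forall x y z, le x y -> le y z -> le x z;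
  le_antisym : forall x y, le x y -> le y x -> x = y;
  dcpo_complete : forall D : dcarrier -> Prop,
      ((exists d, D d) /\
       (forall a b, D a -> D b -> exists c, D c /\ le a c /\ le b c)) ->
      exists s, (forall d, D d -> le d s) /\
                (forall u, (forall d, D d -> le d u) -> le s u)
}.
Arguments le {d} _ _.

Definition directed {P : Dcpo} (D : P -> Prop) : Prop :=
  (exists d, D d) /\ (forall a b, D a -> D b -> exists c, D c /\ le a c /\ le b c).

Definition is_sup {P : Dcpo} (D : P -> Prop) (s : P) : Prop :=
  (forall d, D d -> le d s) /\ (forall u, (forall d, D d -> le d u) -> le s u).

Definition way_below {P : Dcpo} (x y : P) : Prop :=
  forall (D : P -> Prop) (s : P), directed D -> is_sup D s -> le y s ->
    exists d, D d /\ le x d.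

Definition continuous_dcpo (P : Dcpo) : Prop :=
  forall x : P, directed (fun y => way_below y x) /\ is_sup (fun y => way_below y x) x.

Definition scott_open {P : Dcpo} (U : P -> Prop) : Prop :=
  (forall x y, U x -> le x y -> U y) /\
  (forall (D : P -> Prop) (s : P), directed D -> is_sup D s -> U s ->
     exists d, D d /\ U d).

Section Scott.
Variable P : Dcpo.
Lemma scott_ext : forall U V : P -> Prop, (forall x, U x <-> V x) -> scott_open U -> scott_open V.
Proof.
  intros U V H [H1 H2]; split.
  - intros x y Vx xy; apply H; apply (H1 x); auto; apply H; auto.
  - intros D s HD Hs Vs. destruct (H2 D s HD Hs (proj2 (H s) Vs)) as [d [Dd Ud]].
    exists d; split; auto; apply H; auto.
Qed.
Lemma scott_full : scott_open (fun _ : P => True).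
Proof. split; auto. intros D s [[d Dd] _] _ _; exists d; auto. Qed.
Lemma scott_inter : forall U V : P -> Prop, scott_open U -> scott_open V ->
    scott_open (fun x => U x /\ V x).
Proof.
  intros U V [U1 U2] [V1 V2]; split.
  - intros x y [Ux Vx] xy; split; eauto.
  - intros D s HD Hs [Us Vs].
    destruct (U2 D s HD Hs Us) as [a [Da Ua]].
    destruct (V2 D s HD Hs Vs) as [b [Db Vb]].
    destruct (proj2 HD a b Da Db) as [c [Dc [ac bc]]].
    exists c; split; auto; split; eauto.
Qed.
Lemma scott_union : forall F : (P -> Prop) -> Prop,
    (forall U, F U -> scott_open U) -> scott_open (fun x => exists U, F U /\ U x).
Proof.
  intros F HF; split.
  - intros x y [U [FU Ux]] xy; exists U; split; auto. apply (proj1 (HF U FU) x); auto.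
  - intros D s HD Hs [U [FU Us]]. destruct (proj2 (HF U FU) D s HD Hs Us) as [d [Dd Ud]].
    exists d; split; auto; exists U; auto.
Qed.
Definition scott_space : Top :=
  {| carrier := P; is_open := scott_open;
     open_ext := scott_ext; open_full := scott_full;
     open_inter := scott_inter; open_union := scott_union |}.
End Scott.

Definition is_closed {X : Top} (C : X -> Prop) : Prop := is_open (fun x => ~ C x).

Definition point_closure {X : Top} (x : X) : X -> Prop :=
  fun y => forall C : X -> Prop, is_closed C -> C x -> C y.

Definition irreducible_closed {X : Top} (C : X -> Prop) : Prop :=
  is_closed C /\ (exists x, C x) /\
  forall C1 C2 : X -> Prop, is_closed C1 -> is_closed C2 ->
    (forall x, C x -> C1 x \/ C2 x) ->
    (forall x, C x -> C1 x) \/ (forall x, C x -> C2 x).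

Definition sober (X : Top) : Prop :=
  forall C : X -> Prop, irreducible_closed C ->
    exists x, (forall y, C y <-> point_closure x y) /\
      forall x', (forall y, C y <-> point_closure x' y) -> x' = x.

Definition compact {X : Top} (Q : X -> Prop) : Prop :=
  forall F : (X -> Prop) -> Prop,
    (forall U, F U -> is_open U) ->
    (forall x, Q x -> exists U, F U /\ U x) ->
    exists l : list (X -> Prop), (forall U, In U l -> F U) /\
      forall x, Q x -> exists U, In U l /\ U x.

Definition saturated {X : Top} (Q : X -> Prop) : Prop :=
  forall x, (forall U, is_open U -> (forall y, Q y -> U y) -> U x) -> Q x.

Definition locally_compact (X : Top) : Prop :=
  forall (x : X) (U : X -> Prop), is_open U -> U x ->
    exists Q : X -> Prop, compact Q /\ saturated Q /\ (forall y, Q y -> U y) /\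
      exists V, is_open V /\ V x /\ forall y, V y -> Q y.

Definition domain_complete (X : Top) : Prop :=
  exists (P : Dcpo) (A : scott_space P -> Prop),
    continuous_dcpo P /\ G_delta A /\ homeomorphic X (subspace (scott_space P) A).

Definition LCS_complete (X : Top) : Prop :=
  exists (Y : Top) (A : Y -> Prop),
    locally_compact Y /\ sober Y /\ G_delta A /\ homeomorphic X (subspace Y A).

(** * Exponentiability in the full subcategory of Top on objects satisfying C.
    Products in these categories are topological products, so -×X has a
    right adjoint iff for each object Y there is a universal arrow
    ev : E × X -> Y (pointwise description of the right adjoint). *)
Definition exponentiable (C : Top -> Prop) (X : Top) : Prop :=
  forall Y : Top, C Y ->
    exists (E : Top) (ev : prod_top E X -> Y),
      C E /\ continuous ev /\
      forall (Z : Top) (f : prod_top Z X -> Y), C Z -> continuous f ->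
        exists g : Z -> E,
          continuous g /\ (forall z x, f (z, x) = ev (g z, x)) /\
          forall g' : Z -> E, continuous g' -> (forall z x, f (z, x) = ev (g' z, x)) ->
            forall z, g' z = g z.

Definition cartesian_closed (C : Top -> Prop) : Prop :=
  forall X : Top, C X -> exponentiable C X.

(* If X is exponentiable, transposing maps into the Sierpinski space along the test
   space of all families of open sets of X shows that the open sets of X form a
   continuous lattice: X is core-compact.  Domain-complete and LCS-complete spaces are
   G_delta, hence saturated, subspaces of sober spaces, so they are sober, and a sober
   core-compact space is locally compact by the Hofmann-Mislove theorem.  The unbounded
   subsets of nat form a G_delta subspace of the Scott powerset of nat that is not
   locally compact, so neither category is Cartesian-closed. *)

From Stdlib Require Import List Classical ClassicalEpsilon FunctionalExtensionality
  PropExtensionality ProofIrrelevance Lia.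
From mathcomp Require classical_sets.

Lemma pred_ext {A : Type} (P Q : A -> Prop) : (forall a, P a <-> Q a) -> P = Q.
Proof.
  intro H; apply functional_extensionality; intro a; apply propositional_extensionality; auto.
Qed.

Section OpenSets.
Variable X : Top.

Lemma open_empty : is_open (fun _ : X => False).
Proof.
  apply (open_ext X (fun x => exists U, (fun _ : X -> Prop => False) U /\ U x)).
  - intro x; split; [intros [U [[] _]] | intros []].
  - apply open_union; intros U [].
Qed.

Lemma open_union2 (A B : X -> Prop) :
  is_open A -> is_open B -> is_open (fun x => A x \/ B x).
Proof.
  intros HA HB.
  apply (open_ext X (fun x => exists U, (U = A \/ U = B) /\ U x)).
  - intro x; split.
    + intros [U [[-> | ->] Ux]]; auto.
    + intros [Ax | Bx]; [exists A | exists B]; auto.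
  - apply open_union; intros U [-> | ->]; auto.
Qed.

Lemma open_const (P : Prop) : is_open (fun _ : X => P).
Proof.
  destruct (classic P) as [p | np].
  - apply (open_ext X (fun _ => True)); [tauto | apply open_full].
  - apply (open_ext X (fun _ => False)); [tauto | apply open_empty].
Qed.

Lemma closed_compl (U : X -> Prop) : is_open U -> is_closed (fun x => ~ U x).
Proof.
  intro HU; apply (open_ext X U); auto.
  intro x; split; [tauto | apply NNPP].
Qed.

Definition directed_family (F : (X -> Prop) -> Prop) : Prop :=
  (exists W, F W) /\
  forall W1 W2, F W1 -> F W2 ->
    exists W3, F W3 /\ (forall y, W1 y -> W3 y) /\ (forall y, W2 y -> W3 y).

Definition way_below_open (V U : X -> Prop) : Prop :=
  forall F : (X -> Prop) -> Prop, (forall W, F W -> is_open W) -> directed_family F ->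
    (forall y, U y -> exists W, F W /\ W y) -> exists W, F W /\ forall y, V y -> W y.

Definition core_compact : Prop :=
  forall U, is_open U -> forall x, U x -> exists V, is_open V /\ V x /\ way_below_open V U.

Lemma way_below_open_sub V U : is_open U -> way_below_open V U -> forall y, V y -> U y.
Proof.
  intros HU H. destruct (H (fun W => W = U)) as [W [-> HW]]; auto.
  - intros W ->; auto.
  - split; [exists U; auto | intros W1 W2 -> ->; exists U; auto].
  - intros y Uy; exists U; auto.
Qed.

Lemma way_below_open_mono V' V U U' :
  (forall y, V' y -> V y) -> (forall y, U y -> U' y) ->
  way_below_open V U -> way_below_open V' U'.
Proof.
  intros HV HU H F HF HD Hc. destruct (H F HF HD) as [W [FW HW]].
  - intros y Uy; apply Hc; auto.
  - exists W; split; auto.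
Qed.

Lemma way_below_open_union V1 V2 U :
  way_below_open V1 U -> way_below_open V2 U -> way_below_open (fun y => V1 y \/ V2 y) U.
Proof.
  intros H1 H2 F HF HD Hc.
  destruct (H1 F HF HD Hc) as [W1 [F1 HW1]].
  destruct (H2 F HF HD Hc) as [W2 [F2 HW2]].
  destruct (proj2 HD W1 W2 F1 F2) as [W3 [F3 [A B]]].
  exists W3; split; auto. intros y [a | b]; auto.
Qed.

Lemma way_below_open_empty U : way_below_open (fun _ => False) U.
Proof. intros F HF [[W FW] _] _. exists W; split; auto; intros y []. Qed.

(** The open sets [W] with [W << W' << U] for some open [W'] form a directed cover
    of [U] by core compactness; [V << U] picks one of them. *)
Lemma way_below_open_interpolate V U :
  core_compact -> is_open U -> way_below_open V U ->
  exists W, is_open W /\ way_below_open V W /\ way_below_open W U.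
Proof.
  intros cc HU H.
  set (G := fun W => is_open W /\
    exists W', is_open W' /\ way_below_open W W' /\ way_below_open W' U).
  destruct (H G) as [W [[HW [W' [HW' [A B]]]] HVW]].
  - intros W [h _]; auto.
  - split.
    + exists (fun _ => False). split; [apply open_empty|].
      exists (fun _ => False); split; [apply open_empty|]. split; apply way_below_open_empty.
    + intros W1 W2 [o1 [W1' [o1' [a1 b1]]]] [o2 [W2' [o2' [a2 b2]]]].
      exists (fun y => W1 y \/ W2 y). split; [split|].
      * apply open_union2; auto.
      * exists (fun y => W1' y \/ W2' y). split; [apply open_union2; auto|]. split.
        -- apply way_below_open_union.
           ++ apply (way_below_open_mono W1 W1 W1'); auto.
           ++ apply (way_below_open_mono W2 W2 W2'); auto.
        -- apply way_below_open_union; auto.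
      * split; auto.
  - intros y Uy. destruct (cc U HU y Uy) as [W' [HW' [yW' wW']]].
    destruct (cc W' HW' y yW') as [W [HW [yW wW]]].
    exists W; split; auto. split; auto. exists W'; auto.
  - exists W'; split; auto. split; auto. apply (way_below_open_mono V W W'); auto.
Qed.

Lemma way_below_open_finite_subcover V U (F : (X -> Prop) -> Prop) :
  way_below_open V U -> (forall W, F W -> is_open W) ->
  (forall y, U y -> exists W, F W /\ W y) ->
  exists l, (forall W, In W l -> F W) /\ forall y, V y -> exists W, In W l /\ W y.
Proof.
  intros H HF cov.
  set (unions := fun G => exists l, (forall W, In W l -> F W) /\
                   forall y, G y <-> exists W, In W l /\ W y).
  destruct (H unions) as [G [[l [lF hl]] hG]].
  - intros G [l [lF hl]]. apply (open_ext X (fun y => exists W, In W l /\ W y)).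
    + intro y; rewrite hl; tauto.
    + apply open_union. intros W h; apply HF, lF; auto.
  - split.
    + exists (fun _ => False), nil. split; [intros W []|].
      intro y; split; [intros [] | intros [W [[] _]]].
    + intros G1 G2 [l1 [f1 h1]] [l2 [f2 h2]].
      exists (fun y => exists W, In W (l1 ++ l2) /\ W y). split; [|split].
      * exists (l1 ++ l2); split; [|tauto].
        intros W h; apply in_app_or in h as [h | h]; auto.
      * intros y h. apply h1 in h as [W [i w]]. exists W; split; auto. apply in_or_app; auto.
      * intros y h. apply h2 in h as [W [i w]]. exists W; split; auto. apply in_or_app; auto.
  - intros y Uy. destruct (cov y Uy) as [W [FW Wy]].
    exists (fun y => exists W', In W' (W :: nil) /\ W' y). split.
    + exists (W :: nil); split; [intros W' [<- | []]; auto | tauto].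
    + exists W; split; [left|]; auto.
  - exists l. split; auto. intros y Vy. apply hl, hG, Vy.
Qed.

End OpenSets.
Arguments way_below_open {X} V U.
Arguments directed_family {X} F.
Arguments core_compact X : clear implicits.

Section HofmannMislove.
Variable X : Top.

Record scott_open_filter (F : (X -> Prop) -> Prop) : Prop := {
  filter_open : forall U, F U -> is_open U;
  filter_full : F (fun _ => True);
  filter_up : forall U V, F U -> is_open V -> (forall x, U x -> V x) -> F V;
  filter_inter : forall U V, F U -> F V -> F (fun x => U x /\ V x);
  filter_inaccessible : forall G, (forall W, G W -> is_open W) -> directed_family G ->
    forall U, F U -> (forall x, U x -> exists W, G W /\ W x) -> exists W, G W /\ F W
}.

Variable F : (X -> Prop) -> Prop.
Hypothesis HF : scott_open_filter F.

Lemma maximal_open_outside_filter (O : X -> Prop) : is_open O -> ~ F O ->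
  exists M, is_open M /\ (forall x, O x -> M x) /\ ~ F M /\
    forall B, is_open B -> (forall x, M x -> B x) -> ~ F B -> forall x, B x -> M x.
Proof.
  intros HO nFO.
  (* Zorn is applied to the open [S] with [S \/ O] outside [F] rather than to the
     open [M] containing [O], so that the empty chain is admissible. *)
  destruct (@classical_sets.Zorn_bigcup X
              (fun S => is_open S /\ ~ F (fun x => S x \/ O x))) as [A [[HA nFA] Amax]].
  - cbv [classical_sets.subset classical_sets.total_on classical_sets.bigcup
         classical_sets.mkset].
    intros Ch ChP Chtot. split.
    + apply (open_ext X (fun x => exists S, Ch S /\ S x)).
      * intro x; split; [intros [S [h1 h2]]; exists S | intros [S h1 h2]; exists S]; auto.
      * apply open_union; intros S h; apply (ChP S h).
    + intro Hu.
      set (G := fun W => W = O \/ exists S, Ch S /\ W = (fun x => S x \/ O x)).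
      destruct (filter_inaccessible F HF G) with (U := fun x => (exists2 S, Ch S & S x) \/ O x)
        as [W [[-> | [S [ChS ->]]] FW]]; auto.
      * intros W [-> | [S [ChS ->]]]; auto. apply open_union2; auto. apply (ChP S ChS).
      * split; [exists O; left; auto|].
        intros W1 W2 [-> | [S1 [Ch1 ->]]] [-> | [S2 [Ch2 ->]]].
        -- exists O; unfold G; auto.
        -- exists (fun x => S2 x \/ O x); split; [right; eauto | split; auto].
        -- exists (fun x => S1 x \/ O x); split; [right; eauto | split; auto].
        -- destruct (Chtot S1 S2 Ch1 Ch2) as [l | l].
           ++ exists (fun x => S2 x \/ O x); split; [right; eauto|]. split; intros y [h | h]; auto.
           ++ exists (fun x => S1 x \/ O x); split; [right; eauto|]. split; intros y [h | h]; auto.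
      * intros x [[S ChS Sx] | Ox].
        -- exists (fun x => S x \/ O x); split; [right; eauto | auto].
        -- exists O; split; [left |]; auto.
      * apply (ChP S ChS); auto.
  - exists (fun x => A x \/ O x). split; [apply open_union2; auto|]. split; [auto|]. split; [auto|].
    intros B HB AB nFB x Bx. apply NNPP; intro nM.
    apply (Amax B).
    + split; [intros y Ay; apply AB; auto | intro BA; apply nM; left; apply BA, Bx].
    + split; auto. intro h. apply nFB. apply (filter_up F HF _ B h HB).
      intros y [By | Oy]; auto.
Qed.

(** Hofmann-Mislove: the complement of a maximal open set outside the filter is
    irreducible, and its generic point lies in the intersection of the filter. *)
Lemma sober_scott_open_filter (O : X -> Prop) : sober X -> is_open O ->
  (forall x, (forall U, F U -> U x) -> O x) -> F O.
Proof.
  intros sob HO hO. apply NNPP; intro nFO.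
  destruct (maximal_open_outside_filter O HO nFO) as [M [HM [OM [nFM Mmax]]]].
  assert (Mbig : forall C', is_closed C' -> ~ (forall x, ~ M x -> C' x) ->
                   F (fun x => M x \/ ~ C' x)).
  { intros C' HC' nsub. apply NNPP; intro nF.
    apply nsub. intros x nMx. apply NNPP; intro nC.
    apply nMx, (Mmax (fun x => M x \/ ~ C' x)); auto. apply open_union2; auto. }
  assert (irr : irreducible_closed (fun x => ~ M x)).
  { split; [apply closed_compl; auto | split].
    - apply NNPP; intro h. apply nFM, (filter_up F HF _ M (filter_full F HF) HM).
      intros x _. apply NNPP; intro nMx. apply h; eauto.
    - intros C1 C2 H1 H2 cov. apply NNPP; intro h. apply not_or_and in h as [n1 n2].
      apply nFM, (filter_up F HF _ M (filter_inter F HF _ _ (Mbig C1 H1 n1) (Mbig C2 H2 n2)) HM).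
      intros x [[Mx | nC1] [Mx' | nC2]]; auto. apply NNPP; intro nMx.
      destruct (cov x nMx); auto. }
  destruct (sob _ irr) as [p [gp _]].
  assert (nMp : ~ M p) by (apply gp; intros C' _ h; exact h).
  apply nMp, OM, hO. intros U FU. apply NNPP; intro nUp.
  apply nFM, (filter_up F HF U M FU HM). intros x Ux. apply NNPP; intro nMx.
  apply (proj1 (gp x) nMx (fun x => ~ U x)); auto. apply closed_compl, (filter_open F HF U FU).
Qed.

End HofmannMislove.

Section CoreCompactSober.
Variable X : Top.

Lemma way_below_open_chain (V U : X -> Prop) :
  core_compact X -> is_open U -> way_below_open V U ->
  exists W : nat -> X -> Prop,
    (forall n, is_open (W n)) /\ (forall n, way_below_open V (W n)) /\
    (forall n, way_below_open (W (S n)) (W n)) /\ W 0 = U.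
Proof.
  intros cc HU VU.
  destruct (choice (fun W W' => is_open W -> way_below_open V W ->
             is_open W' /\ way_below_open V W' /\ way_below_open W' W)) as [step hstep].
  { intro W. destruct (classic (is_open W /\ way_below_open V W)) as [[HW VW] | h].
    - destruct (way_below_open_interpolate X V W cc HW VW) as [W' HW']. exists W'; auto.
    - exists W; intros HW VW; tauto. }
  exists (fun n => Nat.iter n step U).
  assert (inv : forall n, is_open (Nat.iter n step U) /\ way_below_open V (Nat.iter n step U)).
  { induction n as [|n [IH1 IH2]]; [auto | simpl; destruct (hstep _ IH1 IH2) as [a [b _]]; auto]. }
  split; [intro n; apply inv | split; [intro n; apply inv | split; [|reflexivity]]].
  intro n; destruct (inv n) as [a b]; exact (proj2 (proj2 (hstep _ a b))).
Qed.

Section Chain.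
Variable W : nat -> X -> Prop.
Hypothesis W_open : forall n, is_open (W n).
Hypothesis W_way_below : forall n, way_below_open (W (S n)) (W n).

Lemma chain_antitone m n : m <= n -> forall x, W n x -> W m x.
Proof.
  induction 1 as [|n _ IH]; auto.
  intros x h. apply IH, (way_below_open_sub X (W (S n)) (W n)); auto.
Qed.

Lemma chain_scott_open_filter :
  scott_open_filter X (fun U => is_open U /\ exists n, forall x, W n x -> U x).
Proof.
  split.
  - intros U [HU _]; exact HU.
  - split; [apply open_full | exists 0; auto].
  - intros U V [_ [n hn]] HV UV. split; [exact HV | exists n; auto].
  - intros U V [HU [m hm]] [HV [n hn]]. split; [apply open_inter; auto|].
    exists (Nat.max m n). intros x h. split.
    + apply hm, (chain_antitone m (Nat.max m n)); auto; lia.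
    + apply hn, (chain_antitone n (Nat.max m n)); auto; lia.
  - intros G HG HD U [HU [n hn]] cov.
    destruct (W_way_below n G HG HD) as [V [GV hV]].
    + intros x h; apply cov, hn, h.
    + exists V. split; [|split]; [auto | apply HG; auto | exists (S n); auto].
Qed.

Lemma chain_meet_compact : sober X -> compact (fun x => forall n, W n x).
Proof.
  intros sob F HF cov.
  destruct (sober_scott_open_filter X _ chain_scott_open_filter
              (fun x => exists U, F U /\ U x) sob) as [_ [n hn]].
  - apply open_union; auto.
  - intros x h. apply cov. intro n. apply (h (W n)). split; [auto | exists n; auto].
  - destruct (way_below_open_finite_subcover X (W (S n)) (W n) F) as [l [lF hl]]; auto.
    exists l; split; auto.
Qed.

Lemma chain_meet_saturated : saturated (fun x => forall n, W n x).
Proof. intros x h n. apply h; auto. Qed.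

End Chain.

Lemma core_compact_sober_locally_compact : core_compact X -> sober X -> locally_compact X.
Proof.
  intros cc sob x U HU Ux.
  destruct (cc U HU x Ux) as [V [HV [Vx VU]]].
  destruct (way_below_open_chain V U cc HU VU) as [W [Wo [VW [WW W0]]]].
  exists (fun y => forall n, W n y). split; [|split; [|split]].
  - apply chain_meet_compact; auto.
  - apply chain_meet_saturated; auto.
  - intros y h. rewrite <- W0. apply h.
  - exists V. split; [auto | split; [auto|]].
    intros y Vy n. apply (way_below_open_sub X V (W n)); auto.
Qed.

End CoreCompactSober.

Definition closure {X : Top} (A : X -> Prop) : X -> Prop :=
  fun y => forall D, is_closed D -> (forall z, A z -> D z) -> D y.

Lemma closure_closed (X : Top) (A : X -> Prop) : is_closed (closure A).
Proof.
  apply (open_ext X (fun y => exists U, (exists D, is_closed D /\ (forall z, A z -> D z) /\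
                                             U = fun y => ~ D y) /\ U y)).
  - intro y; split.
    + intros [U [[D [HD [AD ->]]] nDy]] h. apply nDy, h; auto.
    + intro h. apply not_all_ex_not in h as [D h].
      apply imply_to_and in h as [HD h]. apply imply_to_and in h as [AD nDy].
      exists (fun y => ~ D y). split; eauto.
  - apply open_union. intros U [D [HD [_ ->]]]. exact HD.
Qed.

Lemma closure_incl (X : Top) (A : X -> Prop) z : A z -> closure A z.
Proof. intros Az D _ AD; auto. Qed.

Definition embedding {X Y : Top} (e : X -> Y) : Prop :=
  continuous e /\ (forall x x', e x = e x' -> x = x') /\
  forall U, is_open U -> exists V, is_open V /\ forall x, U x <-> V (e x).

Section SaturatedEmbedding.
Variables X Y : Top.
Variable e : X -> Y.
Hypothesis e_embedding : embedding e.

Lemma embedding_closed (D : X -> Prop) :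
  is_closed D -> exists D', is_closed D' /\ forall x, D x <-> D' (e x).
Proof.
  intro h. destruct (proj2 (proj2 e_embedding) _ h) as [V [HV HVe]].
  exists (fun y => ~ V y). split; [apply closed_compl; auto|].
  intro x. rewrite <- HVe. split; [tauto | apply NNPP].
Qed.

Lemma closure_image_point_closure (x : X) (w : Y) :
  closure (fun y => exists c, point_closure x c /\ e c = y) w <-> point_closure (e x) w.
Proof.
  split.
  - intros h D HD Dx. apply h; auto. intros y [c [xc <-]].
    apply (xc (fun c => D (e c))); auto. exact (proj1 e_embedding _ HD).
  - intro h. apply h; [apply closure_closed|]. apply closure_incl.
    exists x; split; auto. intros D _ Dx; exact Dx.
Qed.

(** The generic point of the closure of [e C] lies in every open set containing
    [e C], hence in the saturated image of [e]. *)
Lemma embedding_saturated_image_sober :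
  sober Y -> saturated (fun y => exists x, e x = y) -> sober X.
Proof.
  intros sobY sat C [HC [[c0 Cc0] Hirr]].
  set (Cl := closure (fun y => exists c, C c /\ e c = y)).
  assert (Cl_least : forall D, is_closed D -> (forall c, C c -> D (e c)) -> forall y, Cl y -> D y).
  { intros D HD h y Cly. apply Cly; auto. intros z [c [Cc <-]]; auto. }
  assert (Cl_irr : irreducible_closed Cl).
  { split; [apply closure_closed | split; [exists (e c0); apply closure_incl; eauto|]].
    intros C1 C2 H1 H2 cov.
    destruct (Hirr (fun x => C1 (e x)) (fun x => C2 (e x))) as [h | h].
    - exact (proj1 e_embedding _ H1).
    - exact (proj1 e_embedding _ H2).
    - intros x Cx; apply cov, closure_incl; eauto.
    - left; apply Cl_least; auto.
    - right; apply Cl_least; auto. }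
  destruct (sobY Cl Cl_irr) as [y [gy uy]].
  assert (imy : exists x, e x = y).
  { apply sat. intros U HU imU. apply NNPP; intro nUy.
    apply (proj1 (gy (e c0)) (closure_incl _ _ _ (ex_intro _ c0 (conj Cc0 eq_refl)))
             (fun w => ~ U w)); auto.
    - apply closed_compl; auto.
    - apply imU; eauto. }
  destruct imy as [x <-].
  assert (Cx : C x).
  { destruct (embedding_closed C HC) as [D' [HD' hD']]. apply hD'.
    apply (Cl_least D' HD'); [intros c Cc; apply hD'; auto|].
    apply gy. intros D _ h; exact h. }
  assert (gx : forall z, C z <-> point_closure x z).
  { intro z; split.
    - intros Cz D HD Dx. destruct (embedding_closed D HD) as [D' [HD' hD']]. apply hD'.
      apply (proj1 (gy (e z)) (closure_incl _ _ _ (ex_intro _ z (conj Cz eq_refl))) D' HD').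
      apply hD'; auto.
    - intro h. apply h; auto. }
  exists x; split; [exact gx|].
  intros x' gx'. apply (proj1 (proj2 e_embedding)), uy. intro w.
  rewrite <- closure_image_point_closure. unfold Cl.
  split; intros h D HD hD; apply h; auto; intros z [c [hc <-]]; apply hD; exists c;
    split; auto; apply gx'; auto.
Qed.

End SaturatedEmbedding.

Lemma G_delta_saturated (X : Top) (A : X -> Prop) : G_delta A -> saturated A.
Proof.
  intros [U [HU hA]] x h. apply hA. intro n. apply h; auto.
  intros y Ay. apply hA; auto.
Qed.

Lemma homeomorphic_subspace_embedding (X Y : Top) (A : Y -> Prop) :
  homeomorphic X (subspace Y A) ->
  exists e : X -> Y, embedding e /\ forall y, (exists x, e x = y) <-> A y.
Proof.
  intros [f [g [cf [cg [gf fg]]]]].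
  exists (fun x => proj1_sig (f x)). split; [split; [|split]|].
  - intros V HV. apply (cf (fun s => V (proj1_sig s))). exists V; split; auto. tauto.
  - intros x x' h. rewrite <- (gf x), <- (gf x'). f_equal.
    destruct (f x) as [a pa], (f x') as [b pb]. simpl in h. subst b.
    f_equal. apply proof_irrelevance.
  - intros U HU. destruct (cg U HU) as [V [HV h]]. exists V; split; auto.
    intro x. rewrite <- h, gf. tauto.
  - intro y; split.
    + intros [x <-]. exact (proj2_sig (f x)).
    + intro Ay. exists (g (exist _ y Ay)). rewrite fg. reflexivity.
Qed.

Lemma G_delta_subspace_sober (X Y : Top) (A : Y -> Prop) :
  sober Y -> G_delta A -> homeomorphic X (subspace Y A) -> sober X.
Proof.
  intros sobY GA hX.
  destruct (homeomorphic_subspace_embedding X Y A hX) as [e [he imA]].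
  apply (embedding_saturated_image_sober X Y e he sobY).
  intros y h. apply imA, (G_delta_saturated Y A GA). intros U HU AU.
  apply h; auto. intros z imz. apply AU, imA, imz.
Qed.

Lemma LCS_complete_sober (X : Top) : LCS_complete X -> sober X.
Proof. intros [Y [A [_ [sobY [GA hX]]]]]. exact (G_delta_subspace_sober X Y A sobY GA hX). Qed.

Section ContinuousDcpo.
Variable P : Dcpo.

Lemma way_below_le (x y : P) : way_below x y -> le x y.
Proof.
  intro h. destruct (h (fun d => d = y) y) as [d [-> l]]; auto.
  - split; [exists y; auto | intros a b -> ->; exists y; split; auto; split; apply le_refl].
  - split; [intros d ->; apply le_refl | intros u hu; apply hu; auto].
  - apply le_refl.
Qed.

Lemma le_way_below_trans (a x y : P) : le a x -> way_below x y -> way_below a y.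
Proof.
  intros l h D s HD Hs ys. destruct (h D s HD Hs ys) as [d [Dd xd]].
  exists d; split; auto. eapply le_trans; eauto.
Qed.

Lemma way_below_le_trans (x y z : P) : way_below x y -> le y z -> way_below x z.
Proof. intros h l D s HD Hs zs. apply (h D s HD Hs). eapply le_trans; eauto. Qed.

Lemma scott_open_up (U : P -> Prop) : scott_open U -> forall x y, U x -> le x y -> U y.
Proof. intros [h _]; auto. Qed.

Lemma not_le_scott_open (s : P) : scott_open (fun z => ~ le z s).
Proof.
  split.
  - intros a b h l bs. apply h. eapply le_trans; eauto.
  - intros D t HD [_ Ht] ts. apply NNPP; intro hn. apply ts, Ht.
    intros d Dd. apply NNPP; intro h; apply hn; eauto.
Qed.

Hypothesis cont : continuous_dcpo P.

(** The elements way below some element way below [z] form a directed set with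
    supremum [z]. *)
Lemma way_below_interpolate (x z : P) :
  way_below x z -> exists y, way_below x y /\ way_below y z.
Proof.
  intro h.
  set (D := fun a : P => exists b, way_below a b /\ way_below b z).
  assert (HD : directed D).
  { split.
    - destruct (proj1 (cont z)) as [[b bz] _]. destruct (proj1 (cont b)) as [[a ab] _].
      exists a, b; auto.
    - intros a1 a2 [b1 [ab1 bz1]] [b2 [ab2 bz2]].
      destruct (proj2 (proj1 (cont z)) b1 b2 bz1 bz2) as [b3 [bz3 [l1 l2]]].
      destruct (proj2 (proj1 (cont b3)) a1 a2 (way_below_le_trans _ _ _ ab1 l1)
                  (way_below_le_trans _ _ _ ab2 l2)) as [a3 [ab3 [m1 m2]]].
      exists a3; split; [exists b3; auto | auto]. }
  assert (Hs : is_sup D z).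
  { split.
    - intros a [b [ab bz]]. eapply le_trans; apply way_below_le; eauto.
    - intros u hu. apply (proj2 (proj2 (cont z))). intros b bz.
      apply (proj2 (proj2 (cont b))). intros a ab. apply hu. exists b; auto. }
  destruct (h D z HD Hs (le_refl _ z)) as [d [[b [db bz]] xd]].
  exists b; split; auto. eapply le_way_below_trans; eauto.
Qed.

Lemma way_below_scott_open (y : P) : scott_open (fun z => way_below y z).
Proof.
  split.
  - intros a b h l; eapply way_below_le_trans; eauto.
  - intros D s HD Hs ys. destruct (way_below_interpolate y s ys) as [m [ym ms]].
    destruct (ms D s HD Hs (le_refl _ s)) as [d [Dd md]]. exists d; split; auto.
    eapply way_below_le_trans; eauto.
Qed.

Lemma irreducible_way_below_directed (C : scott_space P -> Prop) :
  irreducible_closed C -> directed (fun y : P => exists c, C c /\ way_below y c).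
Proof.
  intros [HC [[c0 Cc0] Hirr]]. split.
  - destruct (proj1 (cont c0)) as [[y yc] _]. exists y, c0; auto.
  - intros y1 y2 [c1 [C1 w1]] [c2 [C2 w2]].
    assert (hc : exists c, C c /\ way_below y1 c /\ way_below y2 c).
    { apply NNPP; intro hn.
      destruct (Hirr (fun z => ~ way_below y1 z) (fun z => ~ way_below y2 z)) as [h | h].
      - apply closed_compl, way_below_scott_open.
      - apply closed_compl, way_below_scott_open.
      - intros x Cx. apply NNPP; intro h. apply hn. exists x. split; auto.
        split; apply NNPP; intro h'; apply h; auto.
      - apply (h c1); auto.
      - apply (h c2); auto. }
    destruct hc as [c [Cc [a1 a2]]].
    destruct (proj2 (proj1 (cont c)) y1 y2 a1 a2) as [y3 [w3 [l1 l2]]].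
    exists y3; split; auto. exists c; auto.
Qed.

(** The generic point of an irreducible closed set [C] is the supremum of the
    elements way below some element of [C]. *)
Lemma scott_sober : sober (scott_space P).
Proof.
  intros C irr. pose proof (irreducible_way_below_directed C irr) as HD.
  destruct irr as [HC _].
  assert (Cdown : forall x y : P, C y -> le x y -> C x).
  { intros x y Cy l. apply NNPP; intro h. apply (proj1 HC x y h l), Cy. }
  destruct (dcpo_complete P _ HD) as [s Hs].
  assert (Cs : C s).
  { apply NNPP; intro n. destruct (proj2 HC _ s HD Hs n) as [d [[c [Cc w]] nd]].
    apply nd, (Cdown d c Cc), way_below_le, w. }
  assert (closure_le : forall x z : P, @point_closure (scott_space P) x z -> le z x).
  { intros x z h. apply (h (fun z => le z x)); [|apply le_refl].
    apply (scott_ext P (fun z => ~ le z x)); [intro; tauto | apply not_le_scott_open]. }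
  assert (gen : forall z, C z <-> @point_closure (scott_space P) s z).
  { intro z; split.
    - intros Cz C' HC' C's. apply NNPP; intro n.
      apply (proj1 HC' z s n); auto.
      apply (proj2 (proj2 (cont z))). intros y yz. apply (proj1 Hs). exists z; auto.
    - intro h. apply h; auto. }
  exists s; split; auto.
  intros x' gx'. apply le_antisym.
  - apply closure_le, gen, gx'. intros C' _ h; exact h.
  - apply closure_le, gx', Cs.
Qed.

Lemma scott_locally_compact : locally_compact (scott_space P).
Proof.
  intros x U HU Ux.
  destruct (proj2 HU _ x (proj1 (cont x)) (proj2 (cont x)) Ux) as [y [yx Uy]].
  exists (fun z : P => le y z). split; [|split; [|split]].
  - intros F HF Hc. destruct (Hc y (le_refl _ y)) as [W [FW Wy]].
    exists (W :: nil). split.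
    + intros W' [<- | []]; auto.
    + intros z yz. exists W; split; [left; auto|]. apply (scott_open_up W (HF W FW) y z); auto.
  - intros z hz. apply NNPP; intro n. apply (hz (fun w => ~ le w z)).
    + apply not_le_scott_open.
    + intros w yw wz. apply n. eapply le_trans; eauto.
    + apply le_refl.
  - intros z yz. apply (scott_open_up U HU y z); auto.
  - exists (fun z => way_below y z). split; [apply way_below_scott_open|]. split; auto.
    intros z h; apply way_below_le; auto.
Qed.

End ContinuousDcpo.

Lemma domain_complete_LCS_complete (X : Top) : domain_complete X -> LCS_complete X.
Proof.
  intros [P [A [c [GA hX]]]]. exists (scott_space P), A.
  split; [apply scott_locally_compact; auto | split; [apply scott_sober; auto | auto]].
Qed.

Lemma continuous_dcpo_domain_complete (P : Dcpo) :
  continuous_dcpo P -> domain_complete (scott_space P).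
Proof.
  intro c. exists P, (fun _ => True). split; [auto | split].
  - exists (fun _ _ => True). split; [intro; apply open_full | intro; split; auto].
  - exists (fun x => exist _ x I), (@proj1_sig _ _). split; [|split; [|split]].
    + intros V [V' [HV' h]]. apply (scott_ext P V'); auto.
      intro x; rewrite (h (exist _ x I)); tauto.
    + intros V HV. exists V; split; auto. tauto.
    + auto.
    + intros [y []]; reflexivity.
Qed.

Definition powerset_dcpo (T : Type) : Dcpo.
Proof.
  refine {| dcarrier := T -> Prop; le := fun S1 S2 => forall a, S1 a -> S2 a |}; auto.
  - intros S1 S2 h1 h2; apply pred_ext; intro a; split; auto.
  - intros D _. exists (fun a => exists d, D d /\ d a). split.
    + intros d Dd a da; eauto.
    + intros u hu a [d [Dd da]]. apply (hu d Dd); auto.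
Defined.

Definition powerset_space (T : Type) : Top := scott_space (powerset_dcpo T).

Lemma powerset_sup_union (T : Type) (D : powerset_dcpo T -> Prop) (s : powerset_dcpo T) :
  is_sup D s -> forall a, s a -> exists d, D d /\ d a.
Proof.
  intros [_ Hs] a sa. apply (Hs (fun b => exists d, D d /\ d b)); auto.
  intros d Dd b db; eauto.
Qed.

Lemma powerset_continuous (T : Type) : continuous_dcpo (powerset_dcpo T).
Proof.
  intros S.
  assert (wb_union : forall A B, way_below A S -> way_below B S ->
                       @way_below (powerset_dcpo T) (fun a => A a \/ B a) S).
  { intros A B hA hB D s HD Hs Ss. destruct (hA D s HD Hs Ss) as [d1 [D1 l1]].
    destruct (hB D s HD Hs Ss) as [d2 [D2 l2]].
    destruct (proj2 HD d1 d2 D1 D2) as [d3 [D3 [m1 m2]]].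
    exists d3; split; auto. intros a [h | h]; [apply m1, l1 | apply m2, l2]; auto. }
  assert (wb_single : forall a, S a -> @way_below (powerset_dcpo T) (fun b => b = a) S).
  { intros a Sa D s HD Hs Ss. destruct (powerset_sup_union T D s Hs a (Ss a Sa)) as [d [Dd da]].
    exists d; split; auto. intros b ->; auto. }
  split; [split | split].
  - exists (fun _ => False). intros D s HD Hs Ss. destruct (proj1 HD) as [d Dd].
    exists d; split; auto. intros a [].
  - intros A B hA hB. exists (fun a => A a \/ B a). split; [apply wb_union; auto|].
    split; simpl; auto.
  - intros d h. apply way_below_le; auto.
  - intros u hu a Sa. apply (hu (fun b => b = a)); auto.
Qed.

Lemma powerset_meets_open (T : Type) (A : T -> Prop) :
  @is_open (powerset_space T) (fun S => exists a, A a /\ S a).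
Proof.
  split.
  - intros x y [a [Aa xa]] l. exists a; split; [exact Aa | exact (l a xa)].
  - intros D s HD Hs [a [Aa sa]].
    destruct (powerset_sup_union T D s Hs a sa) as [d [Dd da]]. exists d; split; eauto.
Qed.

Lemma powerset_mem_open (T : Type) (a : T) : @is_open (powerset_space T) (fun S => S a).
Proof.
  apply (open_ext (powerset_space T) (fun S => exists b, b = a /\ S b));
    [|apply powerset_meets_open].
  intro S; split; [intros [b [-> h]]; exact h | intro h; exists a; auto].
Qed.

(** [powerset_space unit] is the Sierpinski space: its points are the two truth
    values, and [fun S => S tt] is its only nontrivial open set. *)
Lemma continuous_into_sierpinski (Z : Top) (f : Z -> powerset_space unit) :
  is_open (fun z => f z tt) -> continuous f.
Proof.
  intros Hf V HV.
  apply (open_ext Z (fun z => V (fun _ => False) \/ (f z tt /\ V (fun _ => True)))).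
  - intro z; split.
    + intros [h | [ft h]]; apply (scott_open_up _ V HV _ _ h).
      * intros a [].
      * intros [] _; exact ft.
    + intro h. destruct (classic (f z tt)) as [ft | nft].
      * right; split; auto. apply (scott_open_up _ V HV _ _ h). intros a _; exact I.
      * left. replace (fun _ : unit => False) with (f z); auto.
        apply pred_ext; intros []; tauto.
  - apply open_union2; [apply open_const | apply open_inter; [exact Hf | apply open_const]].
Qed.

Lemma continuous_const (Z Y : Top) (c : Y) : continuous (fun _ : Z => c).
Proof. intros V _. apply open_const. Qed.

Lemma prod_open_snd (Z X : Top) (U : X -> Prop) :
  is_open U -> @is_open (prod_top Z X) (fun p => U (snd p)).
Proof.
  intros HU [z x] Ux. exists (fun _ => True), U.
  split; [apply open_full | split; [exact HU | split; [exact I | split; [exact Ux | auto]]]].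
Qed.

Lemma directed_family_approximates_top (X : Top) (F : (X -> Prop) -> Prop) :
  directed_family F ->
  let D := fun S : powerset_dcpo (X -> Prop) =>
             exists k, F k /\ S = (fun W => F W -> forall y, W y -> k y) in
  directed D /\ is_sup D (fun _ => True).
Proof.
  intros HF D. split; [split|split].
  - destruct (proj1 HF) as [k Fk]. exists (fun W => F W -> forall y, W y -> k y). exists k; auto.
  - intros a b [k1 [F1 ->]] [k2 [F2 ->]]. destruct (proj2 HF k1 k2 F1 F2) as [k3 [F3 [l1 l2]]].
    exists (fun W => F W -> forall y, W y -> k3 y). split; [exists k3; auto|].
    split; simpl; intros W h FW y Wy; eauto.
  - intros d _ a _; exact I.
  - intros u hu W _. destruct (classic (F W)) as [FW | nFW].
    + apply (hu (fun W' => F W' -> forall y, W' y -> W y)); [exists W; auto | auto].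
    + destruct (proj1 HF) as [k Fk].
      apply (hu (fun W' => F W' -> forall y, W' y -> k y)); [exists k; auto | contradiction].
Qed.

(** Transposing [(S, y) |-> U y] into the exponential of the Sierpinski space gives a
    point [e] and a neighbourhood [V] of [x] with [{e} x V] inside the evaluation
    open set.  Given a directed cover [F] of [U], the transpose [g] of
    [(S, y) |-> U y /\ exists W in S, F W /\ W y] satisfies [g top = e] by uniqueness,
    and Scott continuity of [g] at [top] finds a single [k] in [F] covering [V]. *)
Lemma exponentiable_core_compact (C : Top -> Prop) (X : Top) :
  (forall T, C (powerset_space T)) -> exponentiable C X -> core_compact X.
Proof.
  intros CP ex. destruct (ex (powerset_space unit) (CP unit)) as [E [ev [_ [cev univ]]]].
  intros U HU x Ux.
  set (Z := powerset_space (X -> Prop)).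
  set (top := (fun _ => True) : Z).
  set (fU := fun p : prod_top Z X => (fun _ => U (snd p)) : powerset_space unit).
  destruct (univ Z fU (CP _)) as [gU [_ [hgU uU]]].
  { apply continuous_into_sierpinski, prod_open_snd, HU. }
  set (e := gU top).
  assert (evx : ev (e, x) tt) by (unfold e; rewrite <- hgU; exact Ux).
  destruct (cev _ (powerset_mem_open unit tt) (e, x) evx)
    as [We [V [HWe [HV [eWe [Vx rect]]]]]].
  exists V. split; [exact HV | split; [exact Vx |]].
  intros F HF HD cov.
  set (f := fun p : prod_top Z X =>
         (fun _ => U (snd p) /\ exists W, fst p W /\ F W /\ W (snd p)) : powerset_space unit).
  destruct (univ Z f (CP _)) as [g [cg [hg _]]].
  { apply continuous_into_sierpinski. intros [S y] [Uy [W [SW [FW Wy]]]].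
    exists (fun S' : Z => S' W), (fun y => U y /\ W y).
    split; [apply powerset_mem_open | split; [apply open_inter; auto | split; [exact SW|]]].
    split; [split; auto|]. intros S' y' h1 [h2 h3]. split; [exact h2 | eauto]. }
  assert (g_top : g top = e).
  { apply (uU (fun _ => g top)); [apply continuous_const|].
    intros z y. rewrite <- hg. apply pred_ext. intros []. split.
    - intro Uy; split; [exact Uy|]. destruct (cov y Uy) as [W [FW Wy]].
      exists W; exact (conj I (conj FW Wy)).
    - intros [Uy _]; exact Uy. }
  destruct (directed_family_approximates_top X F HD) as [HD' Hsup].
  destruct (proj2 (cg We HWe) _ top HD' Hsup) as [S [[k [Fk ->]] WeS]].
  { rewrite g_top; exact eWe. }
  exists k; split; [exact Fk|]. intros y Vy.
  assert (h : ev (g (fun W => F W -> forall y, W y -> k y), y) tt) by (apply rect; auto).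
  rewrite <- hg in h. destruct h as [_ [W [h1 [FW Wy]]]]. apply (h1 FW); auto.
Qed.

Lemma compact_increasing_cover (X : Top) (Q : X -> Prop) (O : nat -> X -> Prop) :
  compact Q -> (forall j, is_open (O j)) ->
  (forall j j' x, j <= j' -> O j x -> O j' x) -> (forall x, Q x -> exists j, O j x) ->
  exists J, forall x, Q x -> O J x.
Proof.
  intros cQ HO mono cov.
  destruct (cQ (fun W => exists j, W = O j)) as [l [lF lcov]].
  - intros W [j ->]; apply HO.
  - intros x Qx. destruct (cov x Qx) as [j h]. exists (O j); eauto.
  - assert (bound : exists J, forall W, In W l -> forall x, W x -> O J x).
    { clear lcov. induction l as [|W l IH].
      - exists 0. intros W [].
      - destruct IH as [J HJ]; [intros W' h; apply lF; right; exact h|].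
        destruct (lF W (or_introl eq_refl)) as [j ->].
        exists (Nat.max j J). intros W' [<- | h] x h'.
        + apply (mono j); auto; lia.
        + apply (mono J); [lia | apply (HJ W' h x h')]. }
    destruct bound as [J HJ]. exists J. intros x Qx.
    destruct (lcov x Qx) as [W [inW Wx]]. apply (HJ W inW x Wx).
Qed.

Lemma scott_open_initial_segment (V : powerset_space nat -> Prop) :
  is_open V -> V (fun _ => True) -> exists k, V (fun m => m < k).
Proof.
  intros HV Vtop.
  destruct (proj2 HV (fun S => exists k, S = fun m => m < k) (fun _ => True))
    as [S [[k ->] VS]]; eauto.
  - split; [exists (fun m => m < 0); eauto|].
    intros a b [k1 ->] [k2 ->]. exists (fun m => m < Nat.max k1 k2).
    split; [eauto | split; simpl; intros m h; lia].
  - split; [intros d _ m _; exact I|].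
    intros u hu m _. apply (hu (fun m' => m' < S m)); [eauto | simpl; lia].
Qed.

Definition unbounded (S : nat -> Prop) : Prop := forall n, exists m, n <= m /\ S m.

(** Plays the role of Baire space as a domain-complete space that is not locally
    compact. *)
Definition unbounded_subsets : Top := subspace (powerset_space nat) unbounded.

Lemma unbounded_subsets_domain_complete : domain_complete unbounded_subsets.
Proof.
  exists (powerset_dcpo nat), unbounded. split; [apply powerset_continuous|]. split.
  - exists (fun n (S : powerset_space nat) => exists m, n <= m /\ S m). split.
    + intro n. apply powerset_meets_open.
    + intro S; unfold unbounded; tauto.
  - exists (fun x => x), (fun x => x). split; [|split; [|split]]; auto; intros V HV; exact HV.
Qed.

(** Any neighbourhood of [nat] contains all unbounded [S] containing [{m | m < k}]
    for some [k], and these are covered by the increasing open sets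
    [{S | exists m, k <= m < j /\ S m}], none of which contains [{m | m < k \/ J <= m}]. *)
Lemma unbounded_subsets_not_locally_compact : ~ locally_compact unbounded_subsets.
Proof.
  intro lc.
  assert (full_unbounded : unbounded (fun _ => True)) by (intro n; exists n; auto).
  destruct (lc (exist _ _ full_unbounded) (fun _ => True) (open_full _) I)
    as [Q [cQ [_ [_ [V [[V' [HV' hV]] [Vfull VQ]]]]]]].
  destruct (scott_open_initial_segment V' HV') as [k Vk]; [exact (proj1 (hV _) Vfull)|].
  destruct (compact_increasing_cover unbounded_subsets Q
              (fun j s => exists m, (k <= m /\ m < j) /\ proj1_sig s m) cQ) as [J HJ].
  - intro j. exists (fun S : powerset_space nat => exists m, (k <= m /\ m < j) /\ S m).
    split; [apply powerset_meets_open | tauto].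
  - intros j j' s l [m [hm sm]]. exists m; split; [lia | exact sm].
  - intros [s us] _. destruct (us k) as [m [km sm]]. exists (S m), m; simpl; auto.
  - set (t := fun m => m < k \/ J <= m).
    assert (ut : unbounded t) by (intro n; exists (Nat.max n J); split; [lia | right; lia]).
    destruct (HJ (exist _ t ut)) as [m [hm tm]].
    + apply VQ, (proj2 (hV _)). apply (scott_open_up _ V' HV' _ _ Vk). intros m h; left; exact h.
    + simpl in tm. unfold t in tm. lia.
Qed.

Lemma exponentiable_locally_compact_sober (C : Top -> Prop) :
  (forall T, C (powerset_space T)) -> (forall X, C X -> sober X) ->
  forall X, C X -> exponentiable C X -> locally_compact X /\ sober X.
Proof.
  intros CP Csober X CX ex.
  split; [|exact (Csober X CX)].
  apply core_compact_sober_locally_compact; [|exact (Csober X CX)].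
  exact (exponentiable_core_compact C X CP ex).
Qed.

Lemma not_cartesian_closed (C : Top -> Prop) :
  (forall T, C (powerset_space T)) -> (forall X, C X -> sober X) ->
  C unbounded_subsets -> ~ cartesian_closed C.
Proof.
  intros CP Csober CU ccc. apply unbounded_subsets_not_locally_compact.
  exact (proj1 (exponentiable_locally_compact_sober C CP Csober _ CU (ccc _ CU))).
Qed.

Theorem proposition16p1 :
  (forall X : Top, domain_complete X -> exponentiable domain_complete X ->
     locally_compact X /\ sober X) /\
  (forall X : Top, LCS_complete X -> exponentiable LCS_complete X ->
     locally_compact X /\ sober X) /\
  ~ cartesian_closed domain_complete /\
  ~ cartesian_closed LCS_complete.
Proof.
  assert (dc_powerset : forall T, domain_complete (powerset_space T))
    by (intro T; apply continuous_dcpo_domain_complete, powerset_continuous).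
  assert (dc_sober : forall X, domain_complete X -> sober X)
    by (intros X h; apply LCS_complete_sober, domain_complete_LCS_complete, h).
  assert (lcs_powerset : forall T, LCS_complete (powerset_space T))
    by (intro T; apply domain_complete_LCS_complete, dc_powerset).
  split; [|split; [|split]].
  - exact (exponentiable_locally_compact_sober _ dc_powerset dc_sober).
  - exact (exponentiable_locally_compact_sober _ lcs_powerset LCS_complete_sober).
  - exact (not_cartesian_closed _ dc_powerset dc_sober unbounded_subsets_domain_complete).
  - apply (not_cartesian_closed _ lcs_powerset LCS_complete_sober).
    apply domain_complete_LCS_complete, unbounded_subsets_domain_complete.
Qed.
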